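(* Let $a$ be the MMF allocation computed with entitlements $e$ and reported demands $\bar d_1,\dots,\bar d_n$, where $\bar d_i\ge d_i^*$ for all $i$, and let $\underline d_i\le d_i^*$ for all $i$. Then $\ell(d^*,a)\le\sum_{i=1}^n(\bar d_i-d_i^* )\le\sum_{i=1}^n(\bar d_i-\underline d_i)$.
   Context: A divisible resource of size $1$ is shared by $n$ agents with entitlements $e_i>0$, $\sum_ie_i=1$, and true demands $d_i^*\ge0$. MMF$(e,d)$ on reported demands $d_1,\dots,d_n\ge0$: set $r=1$, $E=1$, $S=\{1,\dots,n\}$, $a=0$; process agents $j$ in ascending order of $d_j/e_j$; if $d_j<re_j/E$, set $a_j=d_j$, remove $j$ from $S$, $r\leftarrow r-d_j$, $E\leftarrow E-e_j$ and continue; otherwise set $a_k=re_k/E$ for all $k\in S$ and stop; output $a$. For $d,a\in\mathbb{R}_+^n$: $\ell_{ur}(a)=1-\sum_ia_i$, $\ell_{or}(d,a)=\sum_i(a_i-d_i)^+$, $\ell_{ud}(d,a)=\sum_i(d_i-a_i)^+$, $\ell(d,a)=\min(\ell_{ur}(a)+\ell_{or}(d,a),\ell_{ud}(d,a))$. *)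

From HB Require Import structures.
From mathcomp Require Import all_boot all_order all_algebra.
Set Implicit Arguments. Unset Strict Implicit. Unset Printing Implicit Defensive.
Import Order.TTheory GRing.Theory Num.Theory.
Local Open Scope ring_scope.

Section MMF.
Variables (R : realFieldType) (n : nat).

Definition pos (x : R) : R := Num.max x 0.

(* One run of the MMF loop, processing agents in the order given by s,
   with remaining resource r, remaining entitlement E, current allocation a. *)
Fixpoint mmf_run (e d : 'I_n -> R) (r E : R) (s : seq 'I_n) (a : 'I_n -> R)
  : 'I_n -> R :=
  match s with
  | [::] => a
  | j :: s' =>
      if d j < r * e j / E then
        mmf_run e d (r - d j) (E - e j) s'
          (fun k => if k == j then d j else a k)
      else (fun k => if k \in s then r * e k / E else a k)
  end.

Definition MMF (e d : 'I_n -> R) (s : seq 'I_n) : 'I_n -> R :=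
  mmf_run e d 1 1 s (fun _ => 0).

Definition mmf_order (e d : 'I_n -> R) (s : seq 'I_n) : bool :=
  perm_eq s (enum 'I_n) && sorted (fun i j => d i / e i <= d j / e j) s.

Definition l_ur (a : 'I_n -> R) : R := 1 - \sum_i a i.
Definition l_or (d a : 'I_n -> R) : R := \sum_i pos (a i - d i).
Definition l_ud (d a : 'I_n -> R) : R := \sum_i pos (d i - a i).
Definition loss (d a : 'I_n -> R) : R := Num.min (l_ur a + l_or d a) (l_ud d a).

End MMF.

(** MMF run on the inflated demands [dbar] either grants every agent its full
    demand, or hands out the whole resource without exceeding any demand: when
    the loop stops at agent [j], the sorting by [d/e] makes the fair share
    [r e_k / E] at most [d_k] for every remaining agent [k]. In the first case
    no true demand is under-served, in the second nothing is left unallocated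
    and each over-allocation [a_i - d*_i] is at most [dbar_i - d*_i]. *)

From HB Require Import structures.
From mathcomp Require Import all_boot all_order all_algebra.
Import Order.TTheory GRing.Theory Num.Theory.
Set Implicit Arguments. Unset Strict Implicit.
Local Open Scope ring_scope.

Section MMFRun.
Variables (R : realFieldType) (n : nat) (e d : 'I_n -> R).
Hypothesis e_gt0 : forall i, 0 < e i.

Local Notation ratio_le := (fun i j => d i / e i <= d j / e j).

Lemma mmf_run_notin r E s a k :
  k \notin s -> mmf_run e d r E s a k = a k.
Proof.
elim: s r E a => [//|j s IH] r E a /=; rewrite in_cons negb_or => /andP[kj ks].
by case: ifP => _; rewrite ?IH ?(negbTE kj) // in_cons (negbTE kj) (negbTE ks).
Qed.

Lemma fair_share_le_demand r E j s :
  0 < E -> path ratio_le j s -> r * e j / E <= d j ->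
  forall k, k \in j :: s -> r * e k / E <= d k.
Proof.
move=> E_gt0 js share_j k; rewrite in_cons => /orP[/eqP-> //|ks].
have rE_le : r / E <= d j / e j by rewrite ler_pdivlMr // mulrAC.
have ratio_trans : transitive ratio_le by move=> y x z; apply: le_trans.
have jk : d j / e j <= d k / e k.
  by move/allP: (order_path_min ratio_trans js); apply.
by rewrite mulrAC -ler_pdivlMr //; apply: le_trans rE_le jk.
Qed.

Lemma mmf_run_cases r E s a :
  uniq s -> sorted ratio_le s -> E = \sum_(k <- s) e k ->
  let b := mmf_run e d r E s a in
  (forall k, k \in s -> b k = d k) \/
  (\sum_(k <- s) b k = r /\ forall k, k \in s -> b k <= d k).
Proof.
elim: s r E a => [|j s IH] r E a; first by left.
move=> /= /andP[js us] sorted_js E_def.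
have sorted_s : sorted ratio_le s by apply: path_sorted sorted_js.
case: ifP => [d_lt | /negbT]; last first.
  rewrite -leNgt => share_j.
  have E_gt0 : 0 < E.
    rewrite E_def big_cons ltr_wpDr // big_seq.
    by apply: sumr_ge0 => i _; apply: ltW.
  right; split; last first.
    by move=> k ks; rewrite ks; apply: fair_share_le_demand sorted_js share_j k ks.
  rewrite big_seq_cond (eq_bigr (fun k => r * e k / E)) => [|k /andP[-> _] //].
  by rewrite -big_seq_cond -mulr_suml -mulr_sumr -E_def mulfK // gt_eqF.
have E'_def : E - e j = \sum_(k <- s) e k by rewrite E_def big_cons addrC addKr.
set a' := fun k => if k == j then d j else a k.
have bj : mmf_run e d (r - d j) (E - e j) s a' j = d j.
  by rewrite mmf_run_notin // /a' eqxx.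
case: (IH (r - d j) (E - e j) a' us sorted_s E'_def) => [all_met | [sum_b b_le]].
  by left => k; rewrite in_cons => /orP[/eqP-> | /all_met].
right; split; first by rewrite big_cons sum_b bj addrC subrK.
by move=> k; rewrite in_cons => /orP[/eqP-> | /b_le]; rewrite ?bj.
Qed.

Lemma MMF_cases s :
  \sum_i e i = 1 -> mmf_order e d s ->
  let a := MMF e d s in
  (forall i, a i = d i) \/ (\sum_i a i = 1 /\ forall i, a i <= d i).
Proof.
move=> e_sum /andP[s_perm s_sorted].
have in_s k : k \in s by rewrite (perm_mem s_perm) mem_enum.
have sum_s (F : 'I_n -> R) : \sum_(k <- s) F k = \sum_i F i.
  by rewrite (perm_big _ s_perm) big_enum.
have us : uniq s by rewrite (perm_uniq s_perm) enum_uniq.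
have E_def : 1 = \sum_(k <- s) e k by rewrite sum_s.
case: (mmf_run_cases 1 (fun=> 0) us s_sorted E_def) => [all_met | [sum_a a_le]].
  by left => i; apply: all_met (in_s i).
by right; split; [rewrite -sum_s | move=> i; apply: a_le (in_s i)].
Qed.

End MMFRun.

Section Losses.
Variables (R : realFieldType) (n : nat) (d a : 'I_n -> R).

Lemma l_ud_eq0 : (forall i, d i <= a i) -> l_ud d a = 0.
Proof. by move=> le_da; rewrite /l_ud big1 // => i _; rewrite /pos max_r // subr_le0. Qed.

Lemma l_or_le_excess (dbar : 'I_n -> R) :
  (forall i, d i <= dbar i) -> (forall i, a i <= dbar i) ->
  l_or d a <= \sum_i (dbar i - d i).
Proof.
move=> le_d le_a; apply: ler_sum => i _.
by rewrite /pos ge_max subr_ge0 le_d lerD2r le_a.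
Qed.

End Losses.

Theorem lemma1 (R : realFieldType) (n : nat) (e dstar dbar dlow : 'I_n -> R)
  (s : seq 'I_n)
  (he_pos : forall i, 0 < e i) (he_sum : \sum_i e i = 1)
  (hdstar : forall i, 0 <= dstar i)
  (hdbar : forall i, dstar i <= dbar i)
  (hdlow : forall i, dlow i <= dstar i)
  (hs : mmf_order e dbar s) :
  let a := MMF e dbar s in
  loss dstar a <= \sum_i (dbar i - dstar i) /\
  \sum_i (dbar i - dstar i) <= \sum_i (dbar i - dlow i).
Proof.
move=> a; split; last by apply: ler_sum => i _; rewrite lerD2l lerN2.
rewrite /loss ge_min.
case: (MMF_cases he_pos he_sum hs) => [all_met | [sum_a a_le]].
  rewrite l_ud_eq0 => [|i]; last by rewrite /a all_met hdbar.
  by rewrite sumr_ge0 ?orbT // => i _; rewrite subr_ge0.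
by rewrite /l_ur sum_a subrr add0r l_or_le_excess.
Qed.
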